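(* Let $X:\mathbb{R}^d\to\mathbb{R}_+$ and $M:\mathbb{R}^d\to\mathbb{R}^d$ be random mappings such that $X(ct)=X(t)$ and $M(ct)=cM(t)$ for all $t\in\mathbb{R}^d\setminus\{0\}$ and all scalars $c>0$, and suppose there is $a>0$ with $$\sup_{t\in\mathbb{R}^d\setminus\{0\}}\mathbb{E}[X(t)]<1\quad\text{and}\quad\sup_{t\in\mathbb{S}^{d-1}}\mathbb{E}[|M(t)|^{-a}X(t)]<1.$$ Let $\varphi:\mathbb{R}^d\to\mathbb{R}_+$ be bounded and suppose there is $c_0>0$ with $\varphi(t)\le\mathbb{E}[\varphi(M(t))X(t)]$ for all $t\in\mathbb{R}^d$ with $|t|>c_0$. Then $\varphi(t)=O(|t|^{-a})$ as $|t|\to\infty$.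
   Context: $|x|=\sum_i|x_i|$ is the $L^1$ norm on $\mathbb{R}^d$ and $\mathbb{S}^{d-1}=\{x\in\mathbb{R}^d:|x|=1\}$. *)

From HB Require Import structures.
From mathcomp Require Import all_boot all_order all_algebra.
From mathcomp Require Import all_classical all_reals all_analysis.
Set Implicit Arguments. Unset Strict Implicit. Unset Printing Implicit Defensive.
Import Order.TTheory GRing.Theory Num.Theory.
Local Open Scope ring_scope.

Definition l1norm (R : realType) (d : nat) (x : 'rV[R]_d) : R :=
  \sum_(i < d) `|x 0 i|.

(* |v|^{-a} as an extended real, with the convention |0|^{-a} = +oo (a > 0). *)
Definition l1norm_negpow (R : realType) (d : nat) (a : R) (v : 'rV[R]_d) : \bar R :=
  if v == 0 then +oo%E else ((l1norm v) `^ (- a))%:E.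

From HB Require Import structures.
From mathcomp Require Import all_boot all_order all_algebra.
From mathcomp Require Import all_classical all_reals all_analysis.
From mathcomp Require Import measurable_realfun ring.
Import Order.TTheory GRing.Theory Num.Theory.
Set Implicit Arguments. Unset Strict Implicit. Unset Printing Implicit Defensive.
Local Open Scope ring_scope.
Local Open Scope classical_set_scope.

(* For q > 0 let g(t) = q + |t|^-a and let D be the least constant with
   phi <= D g on {|t| > c0}; it is finite because phi <= K and g >= q.  On
   {|t| <= c0} we have phi <= K <= K c0^a |t|^-a, so phi <= D' g everywhere
   with D' = max(D, K c0^a) (reading |0|^-a as +oo).  Inserting this bound
   into phi(t) <= E[phi(M t) X t] and rescaling t to the unit sphere by
   homogeneity gives phi <= th D' g on {|t| > c0}, where th < 1 bounds both
   suprema.  Hence D <= th max(D, K c0^a), i.e. D <= K c0^a, and the choice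
   q = |t|^-a yields phi(t) <= 2 K c0^a |t|^-a. *)

Section L1norm.
Variables (R : realType) (d : nat).
Implicit Types (v : 'rV[R]_d) (a c : R).

Lemma l1norm_ge0 v : 0 <= l1norm v.
Proof. by apply: sumr_ge0 => i _. Qed.

Lemma l1normZ c v : 0 <= c -> l1norm (c *: v) = c * l1norm v.
Proof.
move=> c_ge0; rewrite /l1norm mulr_sumr; apply: eq_bigr => i _.
by rewrite mxE normrM (ger0_norm c_ge0).
Qed.

Lemma l1norm_eq0 v : (l1norm v == 0) = (v == 0).
Proof.
apply/idP/idP => [/eqP v0|/eqP->]; last first.
  by rewrite /l1norm big1 // => i _; rewrite mxE normr0.
apply/eqP/rowP => i; rewrite mxE; apply/eqP; rewrite -normr_eq0; apply/eqP.
exact: (psumr_eq0P (fun i _ => normr_ge0 (v 0 i)) v0).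
Qed.

Lemma l1norm_gt0 v : (0 < l1norm v) = (v != 0).
Proof. by rewrite lt_def l1norm_eq0 l1norm_ge0 andbT. Qed.

Lemma l1norm_polar v : v != 0 -> exists2 u, l1norm u = 1 & v = l1norm v *: u.
Proof.
rewrite -l1norm_gt0 => v_gt0; exists ((l1norm v)^-1 *: v).
  by rewrite l1normZ ?invr_ge0 ?ltW ?mulVf ?gt_eqF.
by rewrite scalerA mulfV ?gt_eqF ?scale1r.
Qed.

Lemma l1norm_negpow_ge0 a v : (0 <= l1norm_negpow a v)%E.
Proof. by rewrite /l1norm_negpow; case: ifP => // _; rewrite lee_fin powR_ge0. Qed.

Lemma l1norm_negpowZ a c v : 0 < c ->
  l1norm_negpow a (c *: v) = ((c `^ (- a))%:E * l1norm_negpow a v)%E.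
Proof.
move=> c_gt0; rewrite /l1norm_negpow scaler_eq0 (gt_eqF c_gt0) /=.
case: ifP => _; first by rewrite gt0_muley // lte_fin powR_gt0.
by rewrite l1normZ ?ltW // powRM ?l1norm_ge0 ?ltW.
Qed.

Lemma measurable_l1norm_negpow (dT : measure_display) (T : measurableType dT)
    a (f : T -> 'rV[R]_d) :
  (forall i, measurable_fun setT (fun w => f w 0 i)) ->
  measurable_fun setT (fun w => l1norm_negpow a (f w)).
Proof.
move=> mf.
have mnorm : measurable_fun setT (fun w => l1norm (f w)).
  by apply: measurable_sum => i; exact: measurableT_comp.
rewrite /l1norm_negpow; under eq_fun do rewrite -l1norm_eq0.
apply: measurable_fun_ifT.
- by apply: measurable_fun_eqr => //; exact: measurable_cst.
- exact: measurable_cst.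
- by apply/measurable_EFinP; exact: measurableT_comp (measurable_powR _) mnorm.
Qed.

End L1norm.

Lemma ereal_sup_lt1_ubound (R : realType) T (A : set T) (f : T -> \bar R) :
  (ereal_sup (f @` A) < 1%:E)%E ->
  exists2 r : R, r < 1 & forall t, A t -> (f t <= r%:E)%E.
Proof.
have ub t : A t -> (f t <= ereal_sup (f @` A))%E.
  by move=> At; apply: ereal_sup_ubound; exists t.
move: ub; case: (ereal_sup _) => [r| |] // ub; first by rewrite lte_fin; exists r.
by exists 0 => // t /ub; rewrite leeNy_eq => /eqP->; rewrite leNye.
Qed.

Lemma le_max_mul_lt1 (R : realDomainType) (x y k : R) :
  0 <= y -> k < 1 -> x <= Num.max x y * k -> x <= y.
Proof.
move=> y_ge0 k_lt1; have [//|y_lt_x] := leP x y.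
have x_gt0 : 0 < x by apply: le_lt_trans y_lt_x.
by rewrite ler_pMr // leNgt k_lt1.
Qed.

Section contraction.
Variables (R : realType) (d : nat) (dT : measure_display) (Omega : measurableType dT).
Variables (P : probability Omega R) (X : 'rV[R]_d -> Omega -> R).
Variables (M : 'rV[R]_d -> Omega -> 'rV[R]_d) (a th : R).

Hypothesis mX : forall t, measurable_fun setT (X t).
Hypothesis mM : forall t i, measurable_fun setT (fun w => M t w 0 i).
Hypothesis X_ge0 : forall t w, 0 <= X t w.
Hypothesis XZ : forall t c w, t != 0 -> 0 < c -> X (c *: t) w = X t w.
Hypothesis MZ : forall t c w, t != 0 -> 0 < c -> M (c *: t) w = c *: M t w.
Hypothesis integral_X_le : forall t, t != 0 -> (\int[P]_w (X t w)%:E <= th%:E)%E.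
Hypothesis integral_negpowX_le_sphere : forall u, l1norm u = 1 ->
  (\int[P]_w (l1norm_negpow a (M u w) * (X u w)%:E) <= th%:E)%E.

Let mnegpowX t : measurable_fun setT (fun w => l1norm_negpow a (M t w) * (X t w)%:E)%E.
Proof.
by apply: emeasurable_funM; [exact: measurable_l1norm_negpow | exact/measurable_EFinP].
Qed.

Let negpowX_ge0 t w : (0 <= l1norm_negpow a (M t w) * (X t w)%:E)%E.
Proof. by rewrite mule_ge0 ?l1norm_negpow_ge0 ?lee_fin. Qed.

Lemma integral_negpowX_le t : t != 0 ->
  (\int[P]_w (l1norm_negpow a (M t w) * (X t w)%:E) <= (l1norm t `^ (- a) * th)%:E)%E.
Proof.
move=> t_neq0; have s_gt0 : 0 < l1norm t by rewrite l1norm_gt0.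
have [u u_sphere t_eq] := l1norm_polar t_neq0.
have u_neq0 : u != 0 by rewrite -l1norm_eq0 u_sphere oner_neq0.
have -> : (fun w => l1norm_negpow a (M t w) * (X t w)%:E)%E =
    (fun w => (l1norm t `^ (- a))%:E * (l1norm_negpow a (M u w) * (X u w)%:E))%E.
  by apply/funext => w; rewrite [in LHS]t_eq MZ ?XZ // l1norm_negpowZ // muleA.
rewrite ge0_integralZl_EFin ?powR_ge0 // EFinM lee_wpmul2l ?lee_fin ?powR_ge0 //.
exact: integral_negpowX_le_sphere.
Qed.

Lemma integral_le_of_negpow_bound (f : 'rV[R]_d -> R) (D q : R) t :
  0 <= D -> 0 <= q -> (forall v, 0 <= f v) ->
  measurable_fun setT (fun w => f (M t w) * X t w) ->
  (forall v, ((f v)%:E <= D%:E * (q%:E + l1norm_negpow a v))%E) -> t != 0 ->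
  (\int[P]_w (f (M t w) * X t w)%:E <= (D * th * (q + l1norm t `^ (- a)))%:E)%E.
Proof.
move=> D_ge0 q_ge0 f_ge0 mfX f_le t_neq0.
have mEX : measurable_fun setT (fun w => (X t w)%:E) by exact/measurable_EFinP.
have EX_ge0 w : [set: Omega] w -> (0 <= (X t w)%:E)%E by rewrite lee_fin.
have mqX : measurable_fun setT (fun w => q%:E * (X t w)%:E)%E.
  by apply: emeasurable_funM mEX; exact: measurable_cst.
have qX_ge0 w : (0 <= q%:E * (X t w)%:E)%E by rewrite mule_ge0 ?lee_fin.
have pointwise w : ((f (M t w) * X t w)%:E <=
    D%:E * (q%:E * (X t w)%:E + l1norm_negpow a (M t w) * (X t w)%:E))%E.
  rewrite -ge0_muleDl ?lee_fin ?l1norm_negpow_ge0 // muleA EFinM.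
  by apply: lee_wpmul2r; rewrite ?lee_fin.
have mqnX := emeasurable_funD mqX (mnegpowX t).
have qnX_ge0 w : (0 <= q%:E * (X t w)%:E + l1norm_negpow a (M t w) * (X t w)%:E)%E.
  by rewrite adde_ge0.
have mDqnX : measurable_fun setT (fun w =>
    D%:E * (q%:E * (X t w)%:E + l1norm_negpow a (M t w) * (X t w)%:E))%E.
  by apply: emeasurable_funM mqnX; exact: measurable_cst.
have fX_ge0 w : [set: Omega] w -> (0 <= (f (M t w) * X t w)%:E)%E.
  by move=> _; rewrite lee_fin mulr_ge0.
apply: le_trans (ge0_le_integral P measurableT fX_ge0 _ mDqnX (fun w _ => pointwise w)) _.
  exact/measurable_EFinP.
rewrite ge0_integralZl_EFin // ge0_integralD // (ge0_integralZl_EFin _ _ EX_ge0) //.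
have -> : D * th * (q + l1norm t `^ (- a)) = D * (q * th + l1norm t `^ (- a) * th).
  by ring.
rewrite EFinM lee_wpmul2l ?lee_fin // EFinD EFinM.
by rewrite leeD ?integral_negpowX_le // lee_wpmul2l ?lee_fin ?integral_X_le.
Qed.

Variables (phi : 'rV[R]_d -> R) (K c0 : R).
Hypothesis a_gt0 : 0 < a.
Hypothesis th_lt1 : th < 1.
Hypothesis phi_ge0 : forall t, 0 <= phi t.
Hypothesis phi_le_K : forall t, phi t <= K.
Hypothesis K_gt0 : 0 < K.
Hypothesis c0_gt0 : 0 < c0.
Hypothesis mphiX : forall t, measurable_fun setT (fun w => phi (M t w) * X t w).
Hypothesis phi_le_mean : forall t, c0 < l1norm t ->
  ((phi t)%:E <= \int[P]_w (phi (M t w) * X t w)%:E)%E.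

Lemma negpow_bound_of_tail_bound D q : 0 <= q -> K * c0 `^ a <= D ->
    (forall t, c0 < l1norm t -> phi t <= D * (q + l1norm t `^ (- a))) ->
  forall v, ((phi v)%:E <= D%:E * (q%:E + l1norm_negpow a v))%E.
Proof.
move=> q_ge0 KD phi_le v.
have D_gt0 : 0 < D by apply: lt_le_trans KD; rewrite mulr_gt0 ?powR_gt0.
rewrite /l1norm_negpow; case: eqP => [_|/eqP v_neq0].
  by rewrite addey // gt0_muley ?lte_fin // leey.
rewrite -EFinD -EFinM lee_fin.
have [c0_lt|v_le] := ltP c0 (l1norm v); first exact: phi_le.
have v_gt0 : 0 < l1norm v by rewrite l1norm_gt0.
apply: (le_trans (phi_le_K v)).
apply: (@le_trans _ _ (K * c0 `^ a * l1norm v `^ (- a))).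
  rewrite -mulrA ler_pMr // powRN ler_pdivlMr ?powR_gt0 // mul1r.
  by rewrite ge0_ler_powR ?nnegrE ?l1norm_ge0 ?(ltW a_gt0) ?(ltW c0_gt0).
apply: le_trans (ler_wpM2r (powR_ge0 _ _) KD) _.
by rewrite ler_pM2l // lerDr.
Qed.

Lemma tail_bound_contract D q : 0 <= q -> K * c0 `^ a <= D ->
    (forall t, c0 < l1norm t -> phi t <= D * (q + l1norm t `^ (- a))) ->
  forall t, c0 < l1norm t -> phi t <= D * th * (q + l1norm t `^ (- a)).
Proof.
move=> q_ge0 KD phi_le t c0_lt.
have D_ge0 : 0 <= D by apply: le_trans KD; rewrite mulr_ge0 ?powR_ge0 ?ltW.
have t_neq0 : t != 0 by rewrite -l1norm_gt0 (lt_trans c0_gt0).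
rewrite -lee_fin; apply: le_trans (phi_le_mean c0_lt) _.
exact: integral_le_of_negpow_bound (negpow_bound_of_tail_bound q_ge0 KD phi_le) t_neq0.
Qed.

Lemma phi_tail_le q t0 : 0 < q -> c0 < l1norm t0 ->
  phi t0 <= K * c0 `^ a * (q + l1norm t0 `^ (- a)).
Proof.
move=> q_gt0 c0_lt.
pose g (t : 'rV[R]_d) := q + l1norm t `^ (- a).
have g_gt0 t : 0 < g t by rewrite /g (lt_le_trans q_gt0) // lerDl powR_ge0.
pose S := [set phi t / g t | t in [set t | c0 < l1norm t]].
have S_neq0 : S !=set0 by exists (phi t0 / g t0), t0.
have S_sup : has_sup S.
  split=> //; exists (K / q) => _ [t _ <-].
  apply: ler_pM; [exact: phi_ge0 | by rewrite invr_ge0 ltW | exact: phi_le_K |].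
  by rewrite lef_pV2 ?posrE // lerDl powR_ge0.
have phi_le_sup t : c0 < l1norm t -> phi t <= sup S * g t.
  by move=> c0_lt'; rewrite -ler_pdivrMr //; apply: sup_upper_bound => //; exists t.
pose D := Num.max (sup S) (K * c0 `^ a).
have sup_le_D : sup S <= D by rewrite le_max lexx.
have Kc0_le_D : K * c0 `^ a <= D by rewrite le_max lexx orbT.
have phi_le_thD := tail_bound_contract (ltW q_gt0) Kc0_le_D
  (fun t c0_lt' => le_trans (phi_le_sup t c0_lt') (ler_wpM2r (ltW (g_gt0 t)) sup_le_D)).
have sup_le : sup S <= D * th.
  by apply: ge_sup S_neq0 _ => _ [t c0_lt' <-]; rewrite ler_pdivrMr // phi_le_thD.
have sup_le_Kc0 := le_max_mul_lt1 (mulr_ge0 (ltW K_gt0) (powR_ge0 _ _)) th_lt1 sup_le.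
exact: le_trans (phi_le_sup t0 c0_lt) (ler_wpM2r (ltW (g_gt0 t0)) sup_le_Kc0).
Qed.

End contraction.

Theorem lemma4p6 (R : realType) (d : nat)
  (dT : measure_display) (Omega : measurableType dT) (P : probability Omega R)
  (X : 'rV[R]_d -> Omega -> R) (M : 'rV[R]_d -> Omega -> 'rV[R]_d)
  (phi : 'rV[R]_d -> R) (a c0 : R) :
  (* X, M are random mappings: measurable in omega for each fixed t *)
  (forall t, measurable_fun setT (X t)) ->
  (forall t (i : 'I_d), measurable_fun setT (fun w => M t w 0 i)) ->
  (forall t, measurable_fun setT (fun w => phi (M t w) * X t w)) ->
  (forall t w, 0 <= X t w) ->
  (forall t c w, t != 0 -> 0 < c -> X (c *: t) w = X t w) ->
  (forall t c w, t != 0 -> 0 < c -> M (c *: t) w = c *: M t w) ->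
  0 < a ->
  (ereal_sup [set (\int[P]_w (X t w)%:E)%E | t in [set t : 'rV[R]_d | t != 0%R]] < 1%:E)%E ->
  (ereal_sup [set (\int[P]_w (l1norm_negpow a (M t w) * (X t w)%:E))%E
             | t in [set t : 'rV[R]_d | l1norm t = 1%R]] < 1%:E)%E ->
  (forall t, 0 <= phi t) ->
  (exists B : R, forall t, phi t <= B) ->
  0 < c0 ->
  (forall t, c0 < l1norm t ->
     ((phi t)%:E <= \int[P]_w (phi (M t w) * X t w)%:E)%E) ->
  exists C r : R, forall t, r < l1norm t -> phi t <= C * (l1norm t) `^ (- a).
Proof.
move=> mX mM mphiX X_ge0 XZ MZ a_gt0 supX_lt1 supN_lt1 phi_ge0 [B phi_le_B] c0_gt0
  phi_le_mean.
have [th1 th1_lt1 X_le] := ereal_sup_lt1_ubound supX_lt1.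
have [th2 th2_lt1 negpowX_le] := ereal_sup_lt1_ubound supN_lt1.
pose th := Num.max th1 th2.
have th_lt1 : th < 1 by rewrite gt_max th1_lt1 th2_lt1.
have integral_X_le t : t != 0 -> (\int[P]_w (X t w)%:E <= th%:E)%E.
  by move=> t_neq0; rewrite (le_trans (X_le t t_neq0)) // lee_fin le_max lexx.
have integral_negpowX_le u : l1norm u = 1 ->
    (\int[P]_w (l1norm_negpow a (M u w) * (X u w)%:E) <= th%:E)%E.
  move=> u_sphere; rewrite (le_trans (negpowX_le u u_sphere)) //.
  by rewrite lee_fin le_max lexx orbT.
pose K := Num.max B 1.
have phi_le_K t : phi t <= K by rewrite le_max phi_le_B.
have K_gt0 : 0 < K by rewrite lt_max ltr01 orbT.
exists (2 * K * c0 `^ a), c0 => t c0_lt.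
set s := l1norm t `^ (- a).
have s_gt0 : 0 < s by rewrite powR_gt0 // (lt_trans c0_gt0).
have := phi_tail_le mX mM X_ge0 XZ MZ integral_X_le integral_negpowX_le a_gt0 th_lt1
  phi_ge0 phi_le_K K_gt0 c0_gt0 mphiX phi_le_mean s_gt0 c0_lt.
by rewrite -/s (_ : K * c0 `^ a * (s + s) = 2 * K * c0 `^ a * s) //; ring.
Qed.
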